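(* Let $\mathcal{A}=(A,\le,\otimes,e,\to)$ be a strong algebra whose multiplication has a left residual $\Rightarrow_A$ (i.e. $a\otimes b\le c$ iff $b\le a\Rightarrow_A c$ for all $a,b,c$) and which internalizes its closed monoidal structure, i.e. for all $a,b,c\in A$: \[ a\to b\le (c\otimes a)\to(c\otimes b)\quad\text{and}\quad (a\otimes b)\to c\le b\to(a\Rightarrow_A c). \] Then there exist a non-commutative spacetime $\mathcal{S}=(\mathscr{X},\nabla)$ and a map $i:A\to\mathscr{X}$ which is a strict monoidal order embedding satisfying $i(a\to b)=i(a)\to_{\mathcal{S}}i(b)$ for all $a,b\in A$.
   Context: A monoidal poset is a poset with a monoid structure whose multiplication is monotone in each argument. An implication on it is a function $\to:A^{op}\times A\to A$ (antitone in the first, monotone in the second argument) with $e\le a\to a$ and $(a\to b)\otimes(b\to c)\le a\to c$; a strong algebra is a monoidal poset with an implication. A quantale is a monoidal poset with all joins whose multiplication distributes over arbitrary joins in each argument. A non-commutative spacetime is $(\mathscr{X},\nabla)$ with $\mathscr{X}$ a quantale and $\nabla$ join preserving and oplax monoidal ($\nabla e\le e$, $\nabla(a\otimes b)\le\nabla a\otimes\nabla b$); its implication $\to_{\mathcal{S}}$ is characterized by $a\otimes\nabla b\le c$ iff $b\le a\to_{\mathcal{S}}c$. A strict monoidal order embedding is a map $i$ with $i(e)=e$, $i(a\otimes b)=i(a)\otimes i(b)$ and $a\le b\iff i(a)\le i(b)$. *)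

Set Implicit Arguments.

Record monoidal_poset (A : Type) (le : A -> A -> Prop) (mul : A -> A -> A) (e : A)
  : Prop := {
  mp_refl : forall a, le a a;
  mp_trans : forall a b c, le a b -> le b c -> le a c;
  mp_antisym : forall a b, le a b -> le b a -> a = b;
  mp_assoc : forall a b c, mul (mul a b) c = mul a (mul b c);
  mp_unitl : forall a, mul e a = a;
  mp_unitr : forall a, mul a e = a;
  mp_monl : forall a a' b, le a a' -> le (mul a b) (mul a' b);
  mp_monr : forall a b b', le b b' -> le (mul a b) (mul a b')
}.

Record is_implication (A : Type) (le : A -> A -> Prop) (mul : A -> A -> A) (e : A)
  (imp : A -> A -> A) : Prop := {
  imp_anti : forall a a' b, le a a' -> le (imp a' b) (imp a b);
  imp_mono : forall a b b', le b b' -> le (imp a b) (imp a b');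
  imp_unit : forall a, le e (imp a a);
  imp_comp : forall a b c, le (mul (imp a b) (imp b c)) (imp a c)
}.

Definition strong_algebra (A : Type) (le : A -> A -> Prop) (mul : A -> A -> A) (e : A)
  (imp : A -> A -> A) : Prop :=
  monoidal_poset le mul e /\ is_implication le mul e imp.

Definition image (X Y : Type) (f : X -> Y) (S : X -> Prop) : Y -> Prop :=
  fun y => exists x, S x /\ y = f x.

Definition is_lub (X : Type) (le : X -> X -> Prop) (S : X -> Prop) (s : X) : Prop :=
  (forall x, S x -> le x s) /\ (forall u, (forall x, S x -> le x u) -> le s u).

Definition is_quantale (X : Type) (le : X -> X -> Prop) (mul : X -> X -> X) (e : X)
  (sup : (X -> Prop) -> X) : Prop :=
  monoidal_poset le mul e /\
  (forall S, is_lub le S (sup S)) /\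
  (forall a S, mul a (sup S) = sup (image (mul a) S)) /\
  (forall a S, mul (sup S) a = sup (image (fun x => mul x a) S)).

Record spacetime : Type := {
  st_X :> Type;
  st_le : st_X -> st_X -> Prop;
  st_mul : st_X -> st_X -> st_X;
  st_e : st_X;
  st_sup : (st_X -> Prop) -> st_X;
  st_nabla : st_X -> st_X;
  st_quantale : is_quantale st_le st_mul st_e st_sup;
  st_nabla_join : forall S, st_nabla (st_sup S) = st_sup (image st_nabla S);
  st_nabla_unit : st_le (st_nabla st_e) st_e;
  st_nabla_mul : forall a b,
      st_le (st_nabla (st_mul a b)) (st_mul (st_nabla a) (st_nabla b))
}.

(* The implication of a spacetime: a ->_S c = sup { b | a (x) nabla b <= c },
   i.e. the map characterized by  a (x) nabla b <= c  iff  b <= a ->_S c. *)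
Definition st_imp (S : spacetime) (a c : S) : S :=
  st_sup S (fun b => st_le S (st_mul S a (st_nabla S b)) c).

Definition strict_monoidal_order_embedding (A : Type) (le : A -> A -> Prop)
  (mul : A -> A -> A) (e : A) (S : spacetime) (i : A -> S) : Prop :=
  i e = st_e S /\
  (forall a b, i (mul a b) = st_mul S (i a) (i b)) /\
  (forall a b, le a b <-> st_le S (i a) (i b)).

From Stdlib Require Import ProofIrrelevance FunctionalExtensionality PropExtensionality.

(* Take for the spacetime the free quantale (down-closed families) on the
   Smyth preorder of subsets of A, with A embedded via singletons. The map
   box x := e -> x is lax monoidal by the first internalization axiom, so
   V |-> box^-1(up V) is oplax and extends to a join-preserving nabla.
   Both axioms together give a -> b = box (a => b), i.e. b' <= a -> b iff
   b' <= box x for some x with a (x) x <= b; this existential is exactly what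
   the product of the free quantale computes, whence i(a -> b) = i a ->_S i b. *)

Set Implicit Arguments.

Lemma pred_ext (T : Type) (U V : T -> Prop) : (forall x, U x <-> V x) -> U = V.
Proof.
  intros H. apply functional_extensionality; intros x.
  apply propositional_extensionality, H.
Qed.

Record preordered_monoid (P : Type) (R : P -> P -> Prop) (m : P -> P -> P) (u : P)
  : Prop := {
  pm_refl : forall p, R p p;
  pm_trans : forall p q r, R p q -> R q r -> R p r;
  pm_mul_mono : forall p p' q q', R p p' -> R q q' -> R (m p q) (m p' q');
  pm_assoc : forall p q r, m (m p q) r = m p (m q r);
  pm_unitl : forall p, m u p = p;
  pm_unitr : forall p, m p u = p
}.

Section FreeQuantale.

Variables (P : Type) (R : P -> P -> Prop) (m : P -> P -> P) (u : P).
Hypothesis PM : preordered_monoid R m u.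

Record downset := Downset {
  dmem :> P -> Prop;
  dmem_closed : forall p q, R p q -> dmem q -> dmem p
}.

Lemma downset_ext (Z W : downset) : (forall p, Z p <-> W p) -> Z = W.
Proof.
  destruct Z as [Z HZ], W as [W HW]; simpl; intros H.
  assert (Z = W) as <- by now apply pred_ext.
  f_equal. apply proof_irrelevance.
Qed.

Definition dincl (Z W : downset) : Prop := forall p, Z p -> W p.

Lemma dsup_closed (F : downset -> Prop) p q :
  R p q -> (exists Z, F Z /\ Z q) -> exists Z, F Z /\ Z p.
Proof.
  intros Hpq [Z [HZ Hq]]. exists Z. split; [exact HZ | exact (dmem_closed Z Hpq Hq)].
Qed.

Definition dsup (F : downset -> Prop) : downset := Downset _ (dsup_closed F).

Lemma dmul_closed (Z W : downset) p p' :
  R p p' -> (exists q r, Z q /\ W r /\ R p' (m q r)) ->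
  exists q r, Z q /\ W r /\ R p (m q r).
Proof.
  intros Hp [q [r [Hq [Hr Hp']]]].
  exists q, r. repeat split; auto. exact (pm_trans PM _ _ _ Hp Hp').
Qed.

Definition dmul (Z W : downset) : downset := Downset _ (dmul_closed Z W).

Lemma dprincipal_closed (a : P) p q : R p q -> R q a -> R p a.
Proof. apply (pm_trans PM). Qed.

Definition dprincipal (a : P) : downset := Downset _ (@dprincipal_closed a).

Lemma dmul_assoc (Z W V : downset) : dmul (dmul Z W) V = dmul Z (dmul W V).
Proof.
  apply downset_ext; intros p; simpl; split.
  - intros [q [r [[q1 [r1 [Hq1 [Hr1 Hq]]]] [Hr Hp]]]].
    exists q1, (m r1 r). repeat split; auto.
    + exists r1, r. repeat split; auto. apply (pm_refl PM).
    + rewrite <- (pm_assoc PM). apply (pm_trans PM _ _ _ Hp).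
      apply (pm_mul_mono PM); auto. apply (pm_refl PM).
  - intros [q [r [Hq [[q1 [r1 [Hq1 [Hr1 Hr]]]] Hp]]]].
    exists (m q q1), r1. repeat split; auto.
    + exists q, q1. repeat split; auto. apply (pm_refl PM).
    + rewrite (pm_assoc PM). apply (pm_trans PM _ _ _ Hp).
      apply (pm_mul_mono PM); auto. apply (pm_refl PM).
Qed.

Lemma dmul_unitl (Z : downset) : dmul (dprincipal u) Z = Z.
Proof.
  apply downset_ext; intros p; simpl; split.
  - intros [q [r [Hq [Hr Hp]]]]. apply (dmem_closed Z (q := r)); auto.
    rewrite <- (pm_unitl PM r). apply (pm_trans PM _ _ _ Hp).
    apply (pm_mul_mono PM); auto. apply (pm_refl PM).
  - intros Hp. exists u, p. rewrite (pm_unitl PM). repeat split; auto; apply (pm_refl PM).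
Qed.

Lemma dmul_unitr (Z : downset) : dmul Z (dprincipal u) = Z.
Proof.
  apply downset_ext; intros p; simpl; split.
  - intros [q [r [Hq [Hr Hp]]]]. apply (dmem_closed Z (q := q)); auto.
    rewrite <- (pm_unitr PM q). apply (pm_trans PM _ _ _ Hp).
    apply (pm_mul_mono PM); auto. apply (pm_refl PM).
  - intros Hp. exists p, u. rewrite (pm_unitr PM). repeat split; auto; apply (pm_refl PM).
Qed.

Lemma dmul_supr (Z : downset) (F : downset -> Prop) :
  dmul Z (dsup F) = dsup (image (dmul Z) F).
Proof.
  apply downset_ext; intros p; simpl; split.
  - intros [q [r [Hq [[W [HW Hr]] Hp]]]].
    exists (dmul Z W). split; [now exists W | now exists q, r].
  - intros [V [[W [HW ->]] [q [r [Hq [Hr Hp]]]]]].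
    exists q, r. repeat split; auto. now exists W.
Qed.

Lemma dmul_supl (Z : downset) (F : downset -> Prop) :
  dmul (dsup F) Z = dsup (image (fun W => dmul W Z) F).
Proof.
  apply downset_ext; intros p; simpl; split.
  - intros [q [r [[W [HW Hq]] [Hr Hp]]]].
    exists (dmul W Z). split; [now exists W | now exists q, r].
  - intros [V [[W [HW ->]] [q [r [Hq [Hr Hp]]]]]].
    exists q, r. repeat split; auto. now exists W.
Qed.

Lemma free_quantale : is_quantale dincl dmul (dprincipal u) dsup.
Proof.
  split; [| split; [| split]].
  - split; unfold dincl; auto.
    + intros Z W HZW HWZ. apply downset_ext; split; auto.
    + apply dmul_assoc.
    + apply dmul_unitl.
    + apply dmul_unitr.
    + intros Z Z' W H p [q [r [Hq [Hr Hp]]]]. exists q, r; auto.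
    + intros Z W W' H p [q [r [Hq [Hr Hp]]]]. exists q, r; auto.
  - intros F. split.
    + intros Z HZ p Hp. now exists Z.
    + intros W HW p [Z [HZ Hp]]. exact (HW Z HZ p Hp).
  - apply dmul_supr.
  - intros Z F. apply dmul_supl.
Qed.

Lemma dprincipal_mul (a b : P) :
  dprincipal (m a b) = dmul (dprincipal a) (dprincipal b).
Proof.
  apply downset_ext; intros p; simpl; split.
  - intros Hp. exists a, b. repeat split; auto; apply (pm_refl PM).
  - intros [q [r [Hq [Hr Hp]]]].
    apply (pm_trans PM _ _ _ Hp). now apply (pm_mul_mono PM).
Qed.

Lemma dprincipal_le (a b : P) : dincl (dprincipal a) (dprincipal b) <-> R a b.
Proof.
  split.
  - intros H. apply H, (pm_refl PM).
  - intros Hab p Hp. exact (pm_trans PM _ _ _ Hp Hab).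
Qed.

Lemma dsup_principal (F : downset -> Prop) (x : P) :
  (forall Z, F Z <-> dincl Z (dprincipal x)) -> dsup F = dprincipal x.
Proof.
  intros HF. apply downset_ext; intros p; simpl; split.
  - intros [Z [HZ Hp]]. exact (proj1 (HF Z) HZ p Hp).
  - intros Hp. exists (dprincipal x). split; [apply HF; now intros q | exact Hp].
Qed.

Section Nabla.

Variable f : P -> P.

Lemma dimage_closed (Z : downset) p p' :
  R p p' -> (exists q, Z q /\ R p' (f q)) -> exists q, Z q /\ R p (f q).
Proof.
  intros Hp [q [Hq Hp']]. exists q. split; [exact Hq | exact (pm_trans PM _ _ _ Hp Hp')].
Qed.

Definition dimage (Z : downset) : downset := Downset _ (dimage_closed Z).

Lemma dimage_sup (F : downset -> Prop) : dimage (dsup F) = dsup (image dimage F).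
Proof.
  apply downset_ext; intros p; simpl; split.
  - intros [q [[Z [HZ Hq]] Hp]]. exists (dimage Z). split; [now exists Z | now exists q].
  - intros [V [[Z [HZ ->]] [q [Hq Hp]]]]. exists q. split; [now exists Z | exact Hp].
Qed.

Lemma dmul_principal_dimage_le (a b : P) (Z : downset) :
  dincl (dmul (dprincipal a) (dimage Z)) (dprincipal b) <->
  forall q, Z q -> R (m a (f q)) b.
Proof.
  split.
  - intros H q Hq. apply H. exists a, (f q).
    repeat split; try apply (pm_refl PM). now exists q; split; [| apply (pm_refl PM)].
  - intros H p [a' [r [Ha [[q [Hq Hr]] Hp]]]]. simpl in *.
    apply (pm_trans PM _ _ _ Hp), (pm_trans PM _ (m a (f q))); auto.
    now apply (pm_mul_mono PM).
Qed.

Hypothesis f_mono : forall p q, R p q -> R (f p) (f q).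
Hypothesis f_oplax : forall p q, R (f (m p q)) (m (f p) (f q)).
Hypothesis f_unit : R (f u) u.

Lemma dimage_unit : dincl (dimage (dprincipal u)) (dprincipal u).
Proof.
  intros p [q [Hq Hp]]; simpl in *.
  apply (pm_trans PM _ _ _ Hp), (pm_trans PM _ _ _ (f_mono Hq)), f_unit.
Qed.

Lemma dimage_mul (Z W : downset) : dincl (dimage (dmul Z W)) (dmul (dimage Z) (dimage W)).
Proof.
  intros p [q [[q1 [r1 [Hq1 [Hr1 Hq]]]] Hp]]; simpl.
  exists (f q1), (f r1). repeat split.
  - exists q1. split; [exact Hq1 | apply (pm_refl PM)].
  - exists r1. split; [exact Hr1 | apply (pm_refl PM)].
  - apply (pm_trans PM _ _ _ Hp), (pm_trans PM _ _ _ (f_mono Hq)), f_oplax.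
Qed.

Definition free_spacetime : spacetime := {|
  st_X := downset;
  st_le := dincl;
  st_mul := dmul;
  st_e := dprincipal u;
  st_sup := dsup;
  st_nabla := dimage;
  st_quantale := free_quantale;
  st_nabla_join := dimage_sup;
  st_nabla_unit := dimage_unit;
  st_nabla_mul := dimage_mul
|}.

Lemma free_spacetime_imp (a b x : P) :
  (forall q, R q x <-> R (m a (f q)) b) ->
  st_imp free_spacetime (dprincipal a) (dprincipal b) = dprincipal x.
Proof.
  intros Hx. unfold st_imp; simpl. apply dsup_principal; intros Z.
  rewrite dmul_principal_dimage_le.
  split; intros H q Hq.
  - exact (proj2 (Hx q) (H q Hq)).
  - exact (proj1 (Hx q) (H q Hq)).
Qed.

End Nabla.

End FreeQuantale.

Section SmythPowerset.

Variables (A : Type) (le : A -> A -> Prop) (mul : A -> A -> A) (e : A).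
Hypothesis M : monoidal_poset le mul e.

Definition smyth_le (U V : A -> Prop) : Prop := forall t, V t -> exists s, U s /\ le s t.

Definition setmul (U V : A -> Prop) : A -> Prop :=
  fun x => exists s t, U s /\ V t /\ x = mul s t.

Definition singleton (a : A) : A -> Prop := fun x => x = a.

Lemma setmul_assoc (U V W : A -> Prop) : setmul (setmul U V) W = setmul U (setmul V W).
Proof.
  apply pred_ext; intros x; split.
  - intros [s [t [[s1 [t1 [Hs1 [Ht1 ->]]]] [Ht ->]]]].
    exists s1, (mul t1 t). rewrite (mp_assoc M). repeat split; auto. now exists t1, t.
  - intros [s [t [Hs [[s1 [t1 [Hs1 [Ht1 ->]]]] ->]]]].
    exists (mul s s1), t1. rewrite (mp_assoc M). repeat split; auto. now exists s, s1.
Qed.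

Lemma setmul_unitl (U : A -> Prop) : setmul (singleton e) U = U.
Proof.
  apply pred_ext; intros x; split.
  - intros [s [t [-> [Ht ->]]]]. now rewrite (mp_unitl M).
  - intros Hx. exists e, x. rewrite (mp_unitl M). now repeat split.
Qed.

Lemma setmul_unitr (U : A -> Prop) : setmul U (singleton e) = U.
Proof.
  apply pred_ext; intros x; split.
  - intros [s [t [Hs [-> ->]]]]. now rewrite (mp_unitr M).
  - intros Hx. exists x, e. rewrite (mp_unitr M). now repeat split.
Qed.

Lemma smyth_preordered_monoid : preordered_monoid smyth_le setmul (singleton e).
Proof.
  split.
  - intros U t Ht. exists t. split; [exact Ht | apply (mp_refl M)].
  - intros U V W HUV HVW t Ht.
    destruct (HVW t Ht) as [s [Hs Hst]], (HUV s Hs) as [r [Hr Hrs]].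
    exists r. split; [exact Hr | exact (mp_trans M _ _ _ Hrs Hst)].
  - intros U U' V V' HU HV t [s' [t' [Hs' [Ht' ->]]]].
    destruct (HU s' Hs') as [s [Hs Hss]], (HV t' Ht') as [r [Hr Hrr]].
    exists (mul s r). split; [now exists s, r |].
    apply (mp_trans M _ (mul s' r)); [apply (mp_monl M) | apply (mp_monr M)]; assumption.
  - apply setmul_assoc.
  - apply setmul_unitl.
  - apply setmul_unitr.
Qed.

Lemma setmul_singleton (a b : A) : setmul (singleton a) (singleton b) = singleton (mul a b).
Proof.
  apply pred_ext; intros x; split.
  - now intros [s [t [-> [-> ->]]]].
  - intros ->. now exists a, b.
Qed.

Lemma smyth_le_singleton (U : A -> Prop) (b : A) :
  smyth_le U (singleton b) <-> exists s, U s /\ le s b.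
Proof.
  split.
  - intros H. now apply H.
  - intros Hb t ->. exact Hb.
Qed.

Lemma smyth_singleton_le (a b : A) : smyth_le (singleton a) (singleton b) <-> le a b.
Proof.
  rewrite smyth_le_singleton. split.
  - now intros [s [-> Hs]].
  - intros Hab. now exists a.
Qed.

Lemma smyth_setmul_singleton_le (a b : A) (V : A -> Prop) :
  smyth_le (setmul (singleton a) V) (singleton b) <-> exists y, V y /\ le (mul a y) b.
Proof.
  rewrite smyth_le_singleton. split.
  - intros [s [[a' [y [-> [Hy ->]]]] Hs]]. now exists y.
  - intros [y [Hy Hb]]. exists (mul a y). split; [now exists a, y | exact Hb].
Qed.

Definition upper_preimage (f : A -> A) (V : A -> Prop) : A -> Prop :=
  fun x => exists v, V v /\ le v (f x).

Lemma upper_preimage_mono (f : A -> A) (U V : A -> Prop) :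
  smyth_le U V -> smyth_le (upper_preimage f U) (upper_preimage f V).
Proof.
  intros HUV t [v [Hv Hvt]]. destruct (HUV v Hv) as [s [Hs Hsv]].
  exists t. split; [| apply (mp_refl M)].
  exists s. split; [exact Hs | exact (mp_trans M _ _ _ Hsv Hvt)].
Qed.

Lemma upper_preimage_oplax (f : A -> A)
  (f_lax : forall x y, le (mul (f x) (f y)) (f (mul x y))) (U V : A -> Prop) :
  smyth_le (upper_preimage f (setmul U V))
           (setmul (upper_preimage f U) (upper_preimage f V)).
Proof.
  intros t [x [y [[s [Hs Hsx]] [[r [Hr Hry]] ->]]]].
  exists (mul x y). split; [| apply (mp_refl M)].
  exists (mul s r). split; [now exists s, r |].
  apply (mp_trans M _ (mul (f x) (f y))); [| apply f_lax].
  apply (mp_trans M _ (mul (f x) r)); [apply (mp_monl M) | apply (mp_monr M)]; assumption.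
Qed.

Lemma upper_preimage_unit (f : A -> A) (f_unit : le e (f e)) :
  smyth_le (upper_preimage f (singleton e)) (singleton e).
Proof.
  intros t ->. exists e. split; [now exists e | apply (mp_refl M)].
Qed.

End SmythPowerset.

Section ClosedStrongAlgebra.

Variables (A : Type) (le : A -> A -> Prop) (mul : A -> A -> A) (e : A).
Variables (imp limp : A -> A -> A).
Hypothesis M : monoidal_poset le mul e.
Hypothesis I : is_implication le mul e imp.
Hypothesis limp_residual : forall a b c, le (mul a b) c <-> le b (limp a c).
Hypothesis imp_mul_internal : forall a b c, le (imp a b) (imp (mul c a) (mul c b)).
Hypothesis imp_curry_internal : forall a b c, le (imp (mul a b) c) (imp b (limp a c)).

Lemma imp_e_lax (x y : A) : le (mul (imp e x) (imp e y)) (imp e (mul x y)).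
Proof.
  apply (mp_trans M _ (mul (imp e x) (imp x (mul x y)))); [| apply (imp_comp I)].
  apply (mp_monr M). pose proof (imp_mul_internal e y x) as H. now rewrite (mp_unitr M) in H.
Qed.

Lemma le_imp_iff_imp_e (v a b : A) :
  le v (imp a b) <-> exists x, le v (imp e x) /\ le (mul a x) b.
Proof.
  split.
  - intros Hv. exists (limp a b). split.
    + apply (mp_trans M _ _ _ Hv). pose proof (imp_curry_internal a e b) as H. now rewrite (mp_unitr M) in H.
    + apply limp_residual, (mp_refl M).
  - intros [x [Hv Hx]]. apply (mp_trans M _ _ _ Hv).
    apply (mp_trans M _ (imp e (limp a b))); [apply (imp_mono I), limp_residual, Hx |].
    apply (mp_trans M _ (imp a (mul a (limp a b)))).
    + pose proof (imp_mul_internal e (limp a b) a) as H. now rewrite (mp_unitr M) in H.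
    + apply (imp_mono I), limp_residual, (mp_refl M).
Qed.

End ClosedStrongAlgebra.

Theorem theorem6p2 (A : Type) (le : A -> A -> Prop) (mul : A -> A -> A) (e : A)
  (imp : A -> A -> A) (limp : A -> A -> A)
  (Hstrong : strong_algebra le mul e imp)
  (Hres : forall a b c, le (mul a b) c <-> le b (limp a c))
  (Hint1 : forall a b c, le (imp a b) (imp (mul c a) (mul c b)))
  (Hint2 : forall a b c, le (imp (mul a b) c) (imp b (limp a c))) :
  exists (S : spacetime) (i : A -> S),
    strict_monoidal_order_embedding le mul e S i /\
    (forall a b, i (imp a b) = st_imp S (i a) (i b)).
Proof.
  destruct Hstrong as [M I].
  pose proof (smyth_preordered_monoid M) as PM.
  exists (free_spacetime PM (upper_preimage le (imp e))
            (upper_preimage_mono M (f := imp e))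
            (upper_preimage_oplax M (imp_e_lax M I Hint1))
            (upper_preimage_unit M (imp e) (imp_unit I e))).
  exists (fun a => dprincipal PM (singleton a)).
  split; [split; [reflexivity | split] |].
  - intros a b. simpl. rewrite <- setmul_singleton. apply dprincipal_mul.
  - intros a b. simpl. now rewrite dprincipal_le, smyth_singleton_le.
  - intros a b. symmetry. apply free_spacetime_imp. intros q.
    rewrite smyth_le_singleton, smyth_setmul_singleton_le.
    pose proof (le_imp_iff_imp_e limp M I Hres Hint1 Hint2) as Himp. split.
    + intros [s [Hs Hsab]]. destruct (proj1 (Himp s a b) Hsab) as [y [Hy Hab]].
      exists y. split; [now exists s | exact Hab].
    + intros [y [[v [Hv Hvy]] Hab]].
      exists v. split; [exact Hv | apply Himp; now exists y].
Qed.
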